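(* Let $V$ be a Majorana representation with identity $\mathbb 1$ satisfying axiom M2'. Let $x\in V$ be an idempotent. Then the eigenspaces $V_0^{(x)}$ and $V_1^{(x)}$ of $\mathrm{ad}_x$ are subalgebras of $V$.
   Context: A transposition group $(G,T)$ is a finite group $G$ with a $G$-stable set $T$ of involutions generating $G$. A Majorana representation of $(G,T)$ is a quintuple $(G,T,V,\varphi,\psi)$ where $V$ is a commutative non-associative real algebra with a (positive definite) inner product $(\,,)$, $\varphi:G\to GL(V)$ is a representation with $\varphi(G)\le \mathrm{Aut}(V)$, and $\psi:T\to V\setminus\{0\}$ is injective with $\psi(t^g)=\psi(t)^{\varphi(g)}$, such that: (M1) $(u,v\cdot w)=(u\cdot v,w)$ for all $u,v,w$; (M2) $(u\cdot u,v\cdot v)\ge (u\cdot v,u\cdot v)$ for all $u,v$ (Norton inequality); (M3) elements of $\psi(T)$ (Majorana axes) are idempotents of length $1$; (M4) each Majorana axis $a$ has $\mathrm{ad}_a:u\mapsto a\cdot u$ diagonalizable with eigenvalues in $\{0,1,\frac1{4},\frac1{32}\}$; (M5) $1$ is a simple eigenvalue of each Majorana axis; (M6) for each axis $a$ the linear map $\tau(a)$ acting as $(-1)^{32\mu}$ on the $\mu$-eigenspace of $\mathrm{ad}_a$ is an algebra automorphism; (M7) for each axis $a$ the map $\sigma(a)$ on the fixed space $C_V(\tau(a))$ acting as $(-1)^{4\mu}$ on the $\mu$-eigenspaces, $\mu\ne\frac1{32}$, preserves the product of $C_V(\tau(a))$; (M8) $\tau(\psi(t))=\varphi(t)$ for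 all $t\in T$. Axiom M2': the Norton inequality holds for all $u,v$, with equality precisely when $\mathrm{ad}_u$ and $\mathrm{ad}_v$ commute. $V_\mu^{(x)}$ denotes the $\mu$-eigenspace of $\mathrm{ad}_x$. *)

From HB Require Import structures.
From mathcomp Require Import all_boot all_order all_algebra all_fingroup.
From mathcomp Require Import reals.
Set Implicit Arguments. Unset Strict Implicit. Unset Printing Implicit Defensive.
Import Order.TTheory GRing.Theory Num.Theory.
Local Open Scope ring_scope.

Section Majorana.
Variables (R : realType) (V : lmodType R).
Variable (mul : V -> V -> V).
Variable (ip : V -> V -> R).

Definition eigen (x : V) (mu : R) (v : V) : Prop := mul x v = mu *: v.

Definition comm_bilinear : Prop :=
  (forall u v, mul u v = mul v u) /\
  (forall (a : R) u v w, mul u (a *: v + w) = a *: mul u v + mul u w).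

Definition inner_product : Prop :=
  (forall u v, ip u v = ip v u) /\
  (forall (a : R) u v w, ip u (a *: v + w) = a * ip u v + ip u w) /\
  (forall v, v != 0 -> 0 < ip v v).

Definition ad_diag (a : V) : Prop :=
  forall v, exists v0 v1 v4 v32,
    [/\ v = v0 + v1 + v4 + v32, eigen a 0 v0, eigen a 1 v1,
        eigen a (1/4) v4 & eigen a (1/32) v32].

Definition is_tau (a : V) (f : V -> V) : Prop :=
  (forall (c : R) u v, f (c *: u + v) = c *: f u + f v) /\
  (forall v, eigen a 0 v -> f v = v) /\
  (forall v, eigen a 1 v -> f v = v) /\
  (forall v, eigen a (1/4) v -> f v = v) /\
  (forall v, eigen a (1/32) v -> f v = - v).

Definition tau_fixed (a : V) (v : V) : Prop :=
  exists v0 v1 v4, [/\ v = v0 + v1 + v4, eigen a 0 v0, eigen a 1 v1 & eigen a (1/4) v4].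

Definition sigma_ok (a : V) : Prop :=
  exists s : V -> V,
    [/\ (forall (c : R) u v, tau_fixed a u -> tau_fixed a v ->
           s (c *: u + v) = c *: s u + s v),
        (forall v, eigen a 0 v -> s v = v),
        (forall v, eigen a 1 v -> s v = v),
        (forall v, eigen a (1/4) v -> s v = - v) &
        (forall u v, tau_fixed a u -> tau_fixed a v -> s (mul u v) = mul (s u) (s v))].

Definition multiplicative (f : V -> V) : Prop := forall u v, f (mul u v) = mul (f u) (f v).

Definition is_identity (e : V) : Prop := forall v, mul e v = v.

Definition axiom_M2' : Prop :=
  forall u v, ip (mul u v) (mul u v) <= ip (mul u u) (mul v v) /\
    (ip (mul u u) (mul v v) = ip (mul u v) (mul u v) <->
     (forall w, mul u (mul v w) = mul v (mul u w))).

Definition subalgebra (P : V -> Prop) : Prop :=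
  [/\ P 0, (forall (c : R) u v, P u -> P v -> P (c *: u + v)) &
      (forall u v, P u -> P v -> P (mul u v))].

End Majorana.

(* Majorana representation (G, T, V, phi, psi); phi uses the right-action convention
   v^{phi(gh)} = (v^{phi(g)})^{phi(h)}, matching t^g = g^-1 t g in MathComp. *)
Record majorana_rep (gT : finGroupType) (G : {group gT}) (T : {set gT})
  (R : realType) (V : lmodType R) (mul : V -> V -> V) (ip : V -> V -> R)
  (phi : gT -> V -> V) (psi : gT -> V) : Prop := MajoranaRep {
  tg_sub : T \subset G;
  tg_inv : forall t, t \in T -> t != 1%g /\ (t ^+ 2 = 1)%g;
  tg_stable : forall t g, t \in T -> g \in G -> (t ^ g)%g \in T;
  tg_gen : (<<T>> = G)%g;
  alg_mul : comm_bilinear mul;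
  alg_ip : inner_product ip;
  rep_lin : forall g, g \in G -> forall (c : R) u v, phi g (c *: u + v) = c *: phi g u + phi g v;
  rep_bij : forall g, g \in G -> bijective (phi g);
  rep_hom : forall g h, g \in G -> h \in G -> forall v, phi (g * h)%g v = phi h (phi g v);
  rep_aut : forall g, g \in G -> multiplicative mul (phi g);
  psi_inj : {in T &, injective psi};
  psi_nz : forall t, t \in T -> psi t != 0;
  psi_eq : forall t g, t \in T -> g \in G -> psi (t ^ g)%g = phi g (psi t);
  M1 : forall u v w, ip u (mul v w) = ip (mul u v) w;
  M2 : forall u v, ip (mul u v) (mul u v) <= ip (mul u u) (mul v v);
  M3 : forall t, t \in T -> mul (psi t) (psi t) = psi t /\ ip (psi t) (psi t) = 1;
  M4 : forall t, t \in T -> ad_diag mul (psi t);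
  M5 : forall t, t \in T -> forall v, eigen mul (psi t) 1 v -> exists c : R, v = c *: psi t;
  M6 : forall t, t \in T -> exists f, is_tau mul (psi t) f /\ multiplicative mul f;
  M7 : forall t, t \in T -> sigma_ok mul (psi t);
  M8 : forall t, t \in T -> is_tau mul (psi t) (phi t)
}.

From HB Require Import structures.
From mathcomp Require Import all_boot all_order all_algebra all_fingroup.
From mathcomp Require Import reals.
Set Implicit Arguments. Unset Strict Implicit. Unset Printing Implicit Defensive.
Import Order.TTheory GRing.Theory Num.Theory.
Local Open Scope ring_scope.

(* For an idempotent x and u in V_mu with mu^2 = mu, associativity of the form
   gives (x.x, u.u) = (x, u.u) = (x.u, u) = mu (u, u) = mu^2 (u, u) = (x.u, x.u).
   So the Norton inequality is an equality, M2' makes ad_x and ad_u commute, and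
   then x.(u.v) = u.(x.v) = mu u.v for every v in V_mu. *)

Section EigenspaceSubalgebra.
Variables (R : realType) (V : lmodType R) (mul : V -> V -> V) (ip : V -> V -> R).
Hypothesis mulP : comm_bilinear mul.
Hypothesis ipP : inner_product ip.

Lemma bil_mulr0 (u : V) : mul u 0 = 0.
Proof.
have [_ mulD] := mulP; have := mulD 1 u 0 0.
by rewrite !scale1r addr0 -[LHS]addr0 => /addrI.
Qed.

Lemma ip_scaler (a : R) (u v : V) : ip u (a *: v) = a * ip u v.
Proof.
have [_ [ipD _]] := ipP.
have ip0 : ip u 0 = 0.
  by have := ipD 1 u 0 0; rewrite scale1r mul1r addr0 -[LHS]addr0 => /addrI.
by have := ipD a u v 0; rewrite addr0 ip0 addr0.
Qed.

Lemma ip_scalel (a : R) (u v : V) : ip (a *: u) v = a * ip u v.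
Proof. by have [ipC _] := ipP; rewrite ipC ip_scaler ipC. Qed.

Lemma eigen_lin_closed (x : V) (mu c : R) (u v : V) :
  eigen mul x mu u -> eigen mul x mu v -> eigen mul x mu (c *: u + v).
Proof.
have [_ mulD] := mulP; rewrite /eigen => xu xv.
by rewrite mulD xu xv scalerDr !scalerA mulrC.
Qed.

Lemma eigen_subalgebra (x : V) (mu : R) :
  (forall u w, eigen mul x mu u -> mul x (mul u w) = mul u (mul x w)) ->
  subalgebra mul (eigen mul x mu).
Proof.
move=> adx_comm; split=> [|c u v|u v xu xv].
- by rewrite /eigen bil_mulr0 scaler0.
- exact: eigen_lin_closed.
have [_ mulD] := mulP.
rewrite /eigen adx_comm // xv.
by have := mulD mu u v 0; rewrite bil_mulr0 !addr0.
Qed.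

Hypothesis ip_assoc : forall u v w, ip u (mul v w) = ip (mul u v) w.

Lemma norton_eq_idem_eigen (x u : V) (mu : R) :
  mul x x = x -> mu * mu = mu -> eigen mul x mu u ->
  ip (mul x x) (mul u u) = ip (mul x u) (mul x u).
Proof.
move=> xx mu_idem xu.
by rewrite xx ip_assoc xu ip_scalel ip_scaler ip_scalel mulrA mu_idem.
Qed.

Lemma idem_eigen_subalgebra (x : V) (mu : R) :
  axiom_M2' mul ip -> mul x x = x -> mu * mu = mu ->
  subalgebra mul (eigen mul x mu).
Proof.
move=> M2' xx mu_idem; apply: eigen_subalgebra => u w xu.
exact: (proj1 (proj2 (M2' x u)) (norton_eq_idem_eigen xx mu_idem xu)).
Qed.

End EigenspaceSubalgebra.

Theorem mainTheorem2 (gT : finGroupType) (G : {group gT}) (T : {set gT})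
  (R : realType) (V : lmodType R) (mul : V -> V -> V) (ip : V -> V -> R)
  (phi : gT -> V -> V) (psi : gT -> V) :
  majorana_rep G T mul ip phi psi ->
  forall one : V, is_identity mul one ->
  axiom_M2' mul ip ->
  forall x : V, mul x x = x ->
  subalgebra mul (eigen mul x 0) /\ subalgebra mul (eigen mul x 1).
Proof.
move=> MR _ _ M2' x xx.
have subalg mu := idem_eigen_subalgebra (alg_mul MR) (alg_ip MR) (M1 MR) (mu := mu) M2' xx.
by split; apply: subalg; rewrite ?mul0r ?mul1r.
Qed.
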